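(* Let $a\neq b$ be decimal digits. No absolute prime has a decimal representation in which the digit $a$ occurs at least three times and the digit $b$ occurs at least twice.
   Context: For a positive integer $N$ with decimal representation $d_1d_2\dots d_n$ (digits $d_k\in\{0,\dots,9\}$, $d_1\neq 0$), a permutation of the digits of $N$ is any integer $\sum_{k=1}^{n} d_{\sigma(k)}10^{n-k}$ with $\sigma$ a permutation of $\{1,\dots,n\}$. $N$ is called an absolute prime if every integer obtained by a permutation of the digits of $N$ (including $N$ itself) is prime. *)

From mathcomp Require Import all_boot.
Set Implicit Arguments. Unset Strict Implicit. Unset Printing Implicit Defensive.

Fixpoint rev_digits_aux (fuel n : nat) : seq nat :=
  match fuel with
  | 0 => [::]
  | fuel'.+1 => if n == 0 then [::] else (n %% 10) :: rev_digits_aux fuel' (n %/ 10)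
  end.

(* Decimal representation d_1 d_2 ... d_n of n, most significant first;
   for n > 0 the first digit is nonzero. *)
Definition digits (n : nat) : seq nat := rev (rev_digits_aux n n).

Definition num_of_digits (s : seq nat) : nat := foldl (fun acc d => acc * 10 + d) 0 s.

Definition absolute_prime (N : nat) : Prop :=
  0 < N /\ forall s : seq nat, perm_eq s (digits N) -> prime (num_of_digits s).

(* Move three copies of a and two of b to the end.  Whatever the remaining
   prefix r is, it contributes some residue m modulo 7, and a finite check
   shows that for every m some rearrangement t of a a a b b, not starting with
   four zeros, makes m + t divisible by 7 or t even.  The number r t is then
   at least 10 and divisible by 7 or 2, hence not prime. *)
From mathcomp Require Import all_boot.
From mathcomp Require Import zify.

Lemma num_of_digits_cat s t :
  num_of_digits (s ++ t) = num_of_digits s * 10 ^ size t + num_of_digits t.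
Proof.
rewrite /num_of_digits foldl_cat; elim/last_ind: t => [|t d IH].
  by rewrite expn0 muln1 addn0.
by rewrite -cats1 !foldl_cat /= IH size_cat addn1 expnS; lia.
Qed.

Lemma num_of_digits_rcons s d :
  num_of_digits (rcons s d) = num_of_digits s * 10 + d.
Proof. by rewrite -cats1 num_of_digits_cat expn1 /num_of_digits /=. Qed.

Lemma num_of_digits_gt0 s : has (fun d => d != 0) s -> 0 < num_of_digits s.
Proof.
elim/last_ind: s => [|s d IH] //.
by rewrite has_rcons num_of_digits_rcons => /orP[|/IH]; lia.
Qed.

Lemma num_of_digits_take_le n s :
  num_of_digits (take n s) * 10 ^ (size s - n) <= num_of_digits s.
Proof.
by rewrite -{3}(cat_take_drop n s) num_of_digits_cat size_drop leq_addr.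
Qed.

(* Reducing at every step keeps the unary numbers small enough for [vm_compute]. *)
Definition num_of_digits_mod p s := foldl (fun acc d => (acc * 10 + d) %% p) 0 s.

Lemma num_of_digits_modE p s : num_of_digits_mod p s = num_of_digits s %% p.
Proof.
have acc_mod n : foldl (fun acc d => (acc * 10 + d) %% p) (n %% p) s =
                 foldl (fun acc d => acc * 10 + d) n s %% p.
  elim: s n => [|d s IH] n //=; rewrite -IH; congr (foldl _ _ _).
  by rewrite -modnDml modnMml modnDml.
by rewrite /num_of_digits -acc_mod mod0n.
Qed.

Lemma perm_nseq_cat (x : nat) k s :
  k <= count_mem x s -> exists r, perm_eq s (nseq k x ++ r).
Proof.
elim: k s => [|k IH] s le_k_s; first by exists s.
have xs : x \in s by rewrite -has_pred1 has_count; lia.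
have s_rem := perm_to_rem xs.
have [|r rem_r] := IH (rem x s).
  by move: le_k_s; rewrite (permP s_rem) /= eqxx; lia.
by exists r; rewrite (perm_trans s_rem) //= perm_cons.
Qed.

Lemma not_prime_dvd d n : 1 < d < n -> d %| n -> ~~ prime n.
Proof.
move=> /andP[d_gt1 lt_dn] dvd_dn; apply/negP => pr_n.
by move/(prime_nt_dvdP pr_n): dvd_dn => eq_dn; lia.
Qed.

Lemma aaabb_rearrangement a b m : a < 10 -> b < 10 -> a != b -> m < 7 ->
  exists2 t, perm_eq t [:: a; a; a; b; b] &
    has (fun d => d != 0) (take 4 t) &&
    (((m + num_of_digits_mod 7 t) %% 7 == 0) || (num_of_digits_mod 2 t == 0)).
Proof.
have check : all (fun a => all (fun b => (a != b) ==> all (fun m =>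
    has (fun t => has (fun d => d != 0) (take 4 t) &&
      (((m + num_of_digits_mod 7 t) %% 7 == 0) || (num_of_digits_mod 2 t == 0)))
    (permutations [:: a; a; a; b; b])) (iota 0 7)) (iota 0 10)) (iota 0 10).
  by vm_compute.
move=> lt_a lt_b ab lt_m.
have /allP/(_ a) := check; rewrite mem_iota => /(_ lt_a) /allP/(_ b).
rewrite mem_iota => /(_ lt_b); rewrite ab => /allP/(_ m).
rewrite mem_iota => /(_ lt_m) /hasP[t]; rewrite mem_permutations.
by exists t.
Qed.

Lemma aaabb_suffix_not_prime a b r : a < 10 -> b < 10 -> a != b ->
  exists2 t, perm_eq t [:: a; a; a; b; b] & ~~ prime (num_of_digits (r ++ t)).
Proof.
move=> lt_a lt_b ab.
have [t perm_t /andP[head_t dvd_t]] :=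
  @aaabb_rearrangement a b ((num_of_digits r * 10 ^ 5) %% 7) lt_a lt_b ab
    (ltn_pmod _ (isT : 0 < 7)).
exists t => //; have size_t : size t = 5 by rewrite (perm_size perm_t).
have ge10_t : 10 <= num_of_digits t.
  have := num_of_digits_take_le 4 t; have := num_of_digits_gt0 _ head_t.
  by rewrite size_t subSnn expn1 => pos; apply: leq_trans; rewrite leq_pmull.
rewrite num_of_digits_cat size_t; case/orP: dvd_t => [dvd7 | dvd2].
- apply: (@not_prime_dvd 7); first by lia.
  by rewrite /dvdn -modnDm -num_of_digits_modE.
- apply: (@not_prime_dvd 2); first by lia.
  rewrite dvdn_addr ?dvdn_mull ?dvdn_exp //.
  by rewrite /dvdn -num_of_digits_modE.
Qed.

Theorem lemma3 (a b : nat) : a < 10 -> b < 10 -> a != b ->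
  forall N : nat, 3 <= count_mem a (digits N) -> 2 <= count_mem b (digits N) ->
  ~ absolute_prime N.
Proof.
move=> lt_a lt_b ab N count_a count_b [_ all_prime].
have [s perm_s] := @perm_nseq_cat a 3 _ count_a.
have [|r perm_r] := @perm_nseq_cat b 2 s.
  by move: count_b; rewrite (permP perm_s) count_cat count_nseq /= (negbTE ab).
have [t perm_t not_prime_rt] := @aaabb_suffix_not_prime a b r lt_a lt_b ab.
move/negP: not_prime_rt; apply; apply: all_prime.
rewrite perm_sym (perm_trans perm_s) //.
by rewrite (perm_catl _ perm_r) catA perm_catC perm_cat2l perm_sym.
Qed.
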